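(* Let $K$ be a self-similar compact set of ratio $\rho$ and module $\mu$, and put $T_u=K^{(u)}\setminus K^{(u+1)}$ for $u\ge0$. Then for every integer $n\ge1$ and every ordinal $0\le\alpha\le\omega^\omega$, $K^{(n)}[\alpha]=K[\omega^n(1+\alpha)]$. Moreover, for every ordinal $0\le\alpha<\omega^\omega$, \[T_0[\alpha]=\begin{cases}K[\alpha]&\text{if }\alpha<\omega,\\ K[\alpha+1]&\text{if }\alpha\ge\omega,\end{cases}\qquad\text{and}\qquad T_u[\alpha]=K[\omega^u(\alpha+1)]\ \text{ for } u\ge1.\]
   Context: For $A\subset\mathbf{R}$, $A'$ denotes the derived set of $A$, $A^{(0)}=A$, $A^{(n+1)}=(A^{(n)})'$. The reverse usual order is $x\preccurlyeq y$ iff $x\ge y$. A self-similar compact set of ratio $\rho>1$ and module $\mu\in\mathbf{N}$ is a compact set $K\subset[0,+\infty)$ with $\rho K^{(\mu)}=K$, well ordered by $\preccurlyeq$, of order type $\omega^\omega+1$. For a set $L\subset\mathbf{R}$ well ordered by $\preccurlyeq$ and an ordinal $\alpha$ less than its order type, $L[\alpha]$ denotes the element of $L$ in position $\alpha$ for $\preccurlyeq$ (positions start at $0$). Ordinal arithmetic is the standard one. *)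

From Stdlib Require Import Reals.
From mathcomp Require Import all_boot.
Set Implicit Arguments. Unset Strict Implicit. Unset Printing Implicit Defensive.

(* An ordinal < omega^omega is w^k*c_k + ... + w*c_1 + c_0 (c_i in N); *)
(* it is represented by the little-endian list [c_0; c_1; ...; c_k]  *)
(* without trailing zeros (canonical Cantor normal form).             *)

Fixpoint strip (s : seq nat) : seq nat :=
  if s is x :: s' then
    let t := strip s' in if (t == [::]) && (x == 0) then [::] else x :: t
  else [::].

Lemma strip_idem s : strip (strip s) = strip s.
Proof.
elim: s => //= x s IH; case: ifP => [_|H] //=; by rewrite IH H.
Qed.

Record cnf := CNF { cval : seq nat; cval_canon : strip cval == cval }.

Definition mkc (s : seq nat) : cnf := @CNF (strip s) (introT eqP (strip_idem s)).

Fixpoint lexlt (s t : seq nat) : bool :=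
  match s, t with
  | x :: s', y :: t' => (x < y) || ((x == y) && lexlt s' t')
  | _, _ => false
  end.

(* strict order on canonical normal forms: higher degree is bigger, then
   compare coefficients from the highest exponent down *)
Definition cltb (a b : cnf) : bool :=
  let s := cval a in let t := cval b in
  (size s < size t) || ((size s == size t) && lexlt (rev s) (rev t)).

(* ordinal addition on normal forms: alpha + beta, where beta has leading
   exponent k: keep the terms of alpha of exponent > k, add the
   coefficients at exponent k, and take the lower terms of beta *)
Definition radd (s t : seq nat) : seq nat :=
  let t' := strip t in
  if t' is [::] then s else
  let k := (size t').-1 in
  take k t' ++ (nth 0 s k + nth 0 t' k) :: drop k.+1 s.

(* ordinal multiplication on normal forms: for alpha <> 0 of degree d with
   leading coefficient a_d, and beta = w^k b_k + ... + b_0,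
   alpha * beta = w^(d+k) b_k + ... + w^(d+1) b_1 + alpha * b_0, where
   alpha * b_0 = w^d (a_d b_0) + (lower terms of alpha) if b_0 > 0. *)
Definition rmul (s t : seq nat) : seq nat :=
  let s' := strip s in let t' := strip t in
  if s' is [::] then [::] else
  let d := (size s').-1 in
  (if head 0 t' == 0 then nseq d.+1 0
   else take d s' ++ [:: last 0 s' * head 0 t']) ++ behead t'.

Definition cadd (a b : cnf) : cnf := mkc (radd (cval a) (cval b)).
Definition cmul (a b : cnf) : cnf := mkc (rmul (cval a) (cval b)).

(* ordinals <= omega^omega; OTop is omega^omega *)
Inductive ordw := OFin of cnf | OTop.

Definition ordlt (a b : ordw) : bool :=
  match a, b with
  | OFin x, OFin y => cltb x y
  | OFin _, OTop => true
  | OTop, _ => false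
  end.

Definition ozero : ordw := OFin (mkc [::]).
Definition onat (n : nat) : ordw := OFin (mkc [:: n]).
Definition opow (n : nat) : ordw := OFin (mkc (rcons (nseq n 0) 1)).
Definition omega : ordw := opow 1.

(* They are exact whenever the true result is
   <= omega^omega; results that would exceed omega^omega (only possible
   when the left argument is OTop) are saturated to OTop, and never occur
   in the statement. *)
Definition oadd (a b : ordw) : ordw :=
  match a, b with
  | OFin x, OFin y => OFin (cadd x y)
  | _, _ => OTop
  end.

Definition omul (a b : ordw) : ordw :=
  match a, b with
  | OFin x, OFin y => OFin (cmul x y)
  | OFin x, OTop => if cval x is [::] then ozero else OTop
  | OTop, OFin y => if cval y is [::] then ozero else OTop
  | OTop, OTop => OTop
  end.

Local Open Scope R_scope.

Definition derived (A : R -> Prop) : R -> Prop :=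
  fun x => forall eps, 0 < eps -> exists y, A y /\ y <> x /\ Rabs (y - x) < eps.

Fixpoint deriv_n (n : nat) (A : R -> Prop) : R -> Prop :=
  match n with O => A | S n' => derived (deriv_n n' A) end.

Definition rev_iso (L : R -> Prop) (P : ordw -> Prop) (f : R -> ordw) : Prop :=
  (forall x, L x -> P (f x)) /\
  (forall b, P b -> exists x, L x /\ f x = b) /\
  (forall x y, L x -> L y -> (y < x <-> ordlt (f x) (f y))).

(* kpos L a x : x is the element of L in position a for the reverse order,
   i.e. x in L and {y in L | y "precedes" x} = {y in L | y > x} has order
   type a. *)
Definition kpos (L : R -> Prop) (a : ordw) (x : R) : Prop :=
  L x /\ exists f, rev_iso (fun y => L y /\ x < y) (fun b => ordlt b a) f.

(* L is well ordered by the reverse order with order type omega^omega + 1,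
   i.e. isomorphic to all of ordw = {ordinals <= omega^omega} *)
Definition type_ww1 (L : R -> Prop) : Prop :=
  exists f, rev_iso L (fun _ => True) f.

Definition self_similar (K : R -> Prop) (rho : R) (mu : nat) : Prop :=
  1 < rho /\
  compact K /\
  (forall x, K x -> 0 <= x) /\
  (forall x, K x <-> exists y, deriv_n mu K y /\ x = rho * y) /\
  type_ww1 K.

Definition Tset (K : R -> Prop) (u : nat) : R -> Prop :=
  fun x => deriv_n u K x /\ ~ deriv_n u.+1 K x.

From Stdlib Require Import Reals Lra Classical ClassicalEpsilon.
From mathcomp Require Import all_boot zify.
Set Implicit Arguments. Unset Strict Implicit. Unset Printing Implicit Defensive.

(* Only two properties of K are used: K is closed, and K, ordered by the
   reverse order of the reals, is enumerated by the ordinals <= omega^omega.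
   - In a closed set L so enumerated, a point is an accumulation point iff
     its position is a limit ordinal (derived_iff_limit).  The limit ordinals
     <= omega^omega are exactly the omega * (1 + a), increasing in a, and the
     others are exactly the isol a (a < omega^omega), where isol a is a below
     omega and a + 1 above; hence L' and L \ L' are enumerated again, with
     explicit position maps (derived_enum, isolated_enum).
   - Iterating, using omega^n * (1 + omega * (1 + a)) = omega^(n+1) * (1 + a),
     the point of K^(n) at position a is the point of K at position
     omega^n * (1 + a) (deriv_n_enum); isolated_enum applied to K^(u)
     describes T_u, and the theorem follows. *)

Definition coef (a : cnf) (i : nat) : nat := nth 0 (cval a) i.

Lemma nth_strip s i : nth 0 (strip s) i = nth 0 s i.
Proof.
elim: s i => [|x s IH] i //=.
case: ifP => [/andP[/eqP Hs /eqP ->]|_]; last by case: i.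
by case: i => [|i] //=; rewrite -IH Hs nth_nil.
Qed.

Lemma coef_mkc s i : coef (mkc s) i = nth 0 s i.
Proof. exact: nth_strip. Qed.

Lemma cval_stripped (a : cnf) : strip (cval a) = cval a.
Proof. exact/eqP/cval_canon. Qed.

Lemma strip_last_neq0 s : strip s = s -> s != [::] -> nth 0 s (size s).-1 != 0.
Proof.
elim: s => [|x s IH] // Hx _.
have Hs : strip s = s by move: Hx => /=; case: ifP => // _ [].
case: s IH Hx Hs => [|y s] IH Hx Hs /=; first by case: x Hx.
exact: IH.
Qed.

Lemma coef_last_neq0 (a : cnf) : cval a != [::] -> coef a (size (cval a)).-1 != 0.
Proof. exact: strip_last_neq0 (cval_stripped a). Qed.

Lemma coef_ge_size (a : cnf) i : size (cval a) <= i -> coef a i = 0.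
Proof. exact: nth_default. Qed.

Lemma coef_ext (a b : cnf) : (forall i, coef a i = coef b i) -> a = b.
Proof.
move=> E.
have Hsz : size (cval a) = size (cval b).
  apply/eqP; rewrite eqn_leq; apply/andP; split; rewrite leqNgt; apply/negP => Hlt.
  - have Ha : cval a != [::] by move: Hlt; case: (cval a).
    have := coef_last_neq0 Ha; rewrite E coef_ge_size ?eqxx //; lia.
  - have Hb : cval b != [::] by move: Hlt; case: (cval b).
    have := coef_last_neq0 Hb; rewrite -E coef_ge_size ?eqxx //; lia.
case: a b E Hsz => s Hs [t Ht] /= E Hsz.
have Est : s = t by apply: (eq_from_nth (x0 := 0)) => // i _; exact: E.
subst t; congr CNF; exact: eq_irrelevance.
Qed.

Definition coef_lt (a b : cnf) : Prop :=
  exists i, coef a i < coef b i /\ forall j, i < j -> coef a j = coef b j.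

Lemma lexltP u v : lexlt u v -> exists k, [/\ k < size u, nth 0 u k < nth 0 v k &
  forall j, j < k -> nth 0 u j = nth 0 v j].
Proof.
elim: u v => [|x u IH] [|y v] //= /orP[H|/andP[/eqP E /IH [k [H1 H2 H3]]]].
- by exists 0.
- by exists k.+1; split=> // -[|j] Hj /=; [rewrite E | exact: H3].
Qed.

Lemma lexlt_intro u v k : size u = size v -> k < size u -> nth 0 u k < nth 0 v k ->
  (forall j, j < k -> nth 0 u j = nth 0 v j) -> lexlt u v.
Proof.
elim: u v k => [|x u IH] [|y v] [|k] //= [Hs] Hk Hlt Heq; first by rewrite Hlt.
apply/orP; right; apply/andP; split; first by have /= -> := Heq 0 isT.
by apply: (IH _ k) => // j Hj; apply: (Heq j.+1).
Qed.

(* cltb compares degrees first, then the reversed coefficient lists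
   lexicographically; both amount to comparing at the highest exponent
   where the coefficients differ. *)
Lemma cltb_coef_lt a b : cltb a b -> coef_lt a b.
Proof.
rewrite /cltb /coef_lt => /orP[Hlt | /andP[/eqP Hsz /lexltP [k [Hk H1 H2]]]].
- have Hb : cval b != [::] by move: Hlt; case: (cval b).
  exists (size (cval b)).-1; split.
  + by rewrite coef_ge_size; [move: (coef_last_neq0 Hb); lia | lia].
  + by move=> j Hj; rewrite !coef_ge_size //; lia.
- rewrite size_rev in Hk.
  exists (size (cval a) - k.+1); split.
  + by move: H1; rewrite !nth_rev ?size_rev -?Hsz //; lia.
  + move=> j Hj; case: (ltnP j (size (cval a))) => Hja; last first.
      by rewrite !coef_ge_size //; lia.
    have := H2 (size (cval a) - j.+1) ltac:(lia).
    rewrite !nth_rev ?size_rev -?Hsz; try lia.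
    by have -> : size (cval a) - (size (cval a) - j.+1).+1 = j by lia.
Qed.

Lemma coef_lt_cltb a b : coef_lt a b -> cltb a b.
Proof.
rewrite /cltb => -[i [Hi Heq]].
have Hib : i < size (cval b).
  by rewrite ltnNge; apply/negP => H; move: Hi; rewrite (coef_ge_size H) ltn0.
case: (ltngtP (size (cval a)) (size (cval b))) => Hsz //=.
- have Ha : cval a != [::] by move: Hsz; case: (cval a).
  have := coef_last_neq0 Ha; case: (ltnP i (size (cval a)).-1) => Hm.
  + by rewrite Heq // coef_ge_size //; lia.
  + by move: Hi; rewrite (coef_ge_size (a := b)); lia.
- apply: (lexlt_intro (k := size (cval a) - i.+1)); rewrite ?size_rev //; first lia.
  + rewrite !nth_rev ?size_rev -?Hsz; try lia.
    by have -> : size (cval a) - (size (cval a) - i.+1).+1 = i by lia.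
  + move=> j Hj; rewrite !nth_rev ?size_rev -?Hsz; try lia.
    by apply: Heq; lia.
Qed.

Lemma ordltE a b : ordlt (OFin a) (OFin b) <-> coef_lt a b.
Proof. by split => [/cltb_coef_lt | /coef_lt_cltb]. Qed.

Definition is_nat (c : cnf) : bool := size (cval c) <= 1.

Lemma is_natP (c : cnf) : reflect (forall j, coef c j.+1 = 0) (is_nat c).
Proof.
apply: (iffP idP) => [H j | H]; first by rewrite coef_ge_size //; move: H; rewrite /is_nat; lia.
rewrite /is_nat leqNgt; apply/negP => Hs.
have Hne : cval c != [::] by move: Hs; case: (cval c).
move: (coef_last_neq0 Hne); have -> : (size (cval c)).-1 = (size (cval c)).-2.+1 by lia.
by rewrite H.
Qed.

Lemma is_nat_tail s t : (forall j, coef s j.+1 = coef t j.+1) -> is_nat s = is_nat t.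
Proof.
by move=> E; apply/is_natP/is_natP => H j; [rewrite -E | rewrite E].
Qed.

Lemma coef_add1 s i :
  coef (cadd s (mkc [:: 1])) i = if i == 0 then (coef s 0).+1 else coef s i.
Proof.
by rewrite /cadd coef_mkc /radd /=; case: i => [|i] /=; rewrite ?addn1 ?nth_drop.
Qed.

Lemma take_size_nth (l : seq nat) :
  l != [::] -> take (size l).-1 l ++ [:: nth 0 l (size l).-1] = l.
Proof.
case/lastP: l => [|p z] // _.
by rewrite size_rcons /= -cats1 take_size_cat // nth_cat ltnn subnn.
Qed.

Lemma coef_1add s i :
  coef (cadd (mkc [:: 1]) s) i = if (i == 0) && is_nat s then (coef s 0).+1 else coef s i.
Proof.
rewrite /cadd coef_mkc /radd /= cval_stripped /coef /is_nat.
case: (cval s) => [|x [|y r]] /=; first by case: i => [|[|i]].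
- by case: i => [|[|i]] //=; rewrite add1n.
- have /= Hxyr := take_size_nth (l := x :: y :: r) isT.
  by rewrite nth_nil add0n Hxyr andbF.
Qed.

Lemma strip_pow n : strip (rcons (nseq n 0) 1) = rcons (nseq n 0) 1.
Proof. by elim: n => //= n ->; case: n. Qed.

Lemma coef_mul_pow n u i :
  coef (cmul (mkc (rcons (nseq n 0) 1)) u) i = if i < n then 0 else coef u (i - n).
Proof.
rewrite /cmul coef_mkc /rmul /= !strip_pow cval_stripped.
case E: (rcons (nseq n 0) 1) => [|x r]; first by case: (nseq n 0) E.
rewrite -E size_rcons size_nseq /= -cats1 take_size_cat ?size_nseq // last_cat /= /coef.
have Hn : 0 :: nseq n 0 = rcons (nseq n 0) 0 by elim: n {E} => //= n ->.
have Hcat l : nth 0 (nseq n 0 ++ l) i = if i < n then 0 else nth 0 l (i - n).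
  by rewrite nth_cat size_nseq nth_nseq; case: (i < n).
case: (cval u) => [|y l] /=.
- rewrite -cat_cons Hn cat_rcons Hcat; case: (i < n) => //; by case: (i - n) => [|[]].
- case: eqP => [->|_] /=; first by rewrite -cat_cons Hn cat_rcons Hcat.
  by rewrite -catA /= mul1n Hcat.
Qed.

Lemma coef_zero i : coef (mkc [::]) i = 0.
Proof. by rewrite coef_mkc nth_nil. Qed.

Lemma zero_lt t : (exists i, coef t i <> 0) -> ordlt ozero (OFin t).
Proof.
move=> [i Hi]; apply/ordltE.
have Hne : cval t != [::] by move: Hi; rewrite /coef; case: (cval t) => //; rewrite nth_nil.
exists (size (cval t)).-1; split; first by rewrite coef_zero; move: (coef_last_neq0 Hne); lia.
by move=> j Hj; rewrite coef_zero coef_ge_size //; lia.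
Qed.

Definition csucc (s : cnf) : cnf := cadd s (mkc [:: 1]).
Definition cpred (s : cnf) : cnf := mkc ((coef s 0).-1 :: behead (cval s)).

Lemma coef_cpred s i : coef (cpred s) i = if i == 0 then (coef s 0).-1 else coef s i.
Proof. by rewrite /cpred coef_mkc; case: i => //= i; rewrite nth_behead. Qed.

Lemma cpredK s : coef s 0 <> 0 -> csucc (cpred s) = s.
Proof.
move=> H; apply: coef_ext => i; rewrite /csucc coef_add1 !coef_cpred.
by case: eqP => [->|//]; rewrite eqxx; lia.
Qed.

Lemma is_nat_csucc s : is_nat (csucc s) = is_nat s.
Proof. by apply: is_nat_tail => j; rewrite coef_add1. Qed.

Lemma csucc_lt s : ordlt (OFin s) (OFin (csucc s)).
Proof. by apply/ordltE; exists 0; rewrite coef_add1; split => // -[|j] // _; rewrite coef_add1. Qed.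

Lemma csucc_gap s c : ordlt (OFin s) c -> ordlt c (OFin (csucc s)) -> False.
Proof.
case: c => [c|] //= /ordltE [i [Hi He]] /ordltE [i' [Hi' He']].
move: Hi'; rewrite coef_add1 => Hi'.
case: (ltngtP i i') => H.
- by have := He i' H; move: Hi'; case: eqP => [?|_]; lia.
- by have := He' i H; rewrite coef_add1; case: eqP => [?|_]; lia.
- by subst i'; move: Hi'; case: eqP => [?|_]; subst; lia.
Qed.

Definition is_limit (b : ordw) : Prop :=
  (exists c, ordlt c b) /\ (forall c, ordlt c b -> exists d, ordlt c d /\ ordlt d b).

Lemma is_limit_top : is_limit OTop.
Proof.
split; first by exists ozero.
by move=> [s|] // _; exists (OFin (csucc s)); split => //; exact: csucc_lt.
Qed.

Lemma is_limit_fin t : is_limit (OFin t) <-> (exists i, coef t i <> 0) /\ coef t 0 = 0.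
Proof.
split.
- move=> [[c Hc] HL]; split.
  + by case: c Hc => [s|] // /ordltE [i [Hi _]]; exists i; lia.
  + case H0: (coef t 0) => [|k] //; have Hne : coef t 0 <> 0 by rewrite H0.
    have Hp : ordlt (OFin (cpred t)) (OFin t) by rewrite -{2}(cpredK Hne); exact: csucc_lt.
    have [d [H1 H2]] := HL _ Hp.
    by rewrite -(cpredK Hne) in H2; case: (csucc_gap H1 H2).
- move=> [Hnz H0]; split; first by exists ozero; exact: zero_lt.
  move=> [s|] // /ordltE [i [Hi He]].
  exists (OFin (csucc s)); split; first exact: csucc_lt.
  have Hi0 : i != 0 by apply/eqP => E; subst i; lia.
  apply/ordltE; exists i; rewrite coef_add1 (negbTE Hi0); split => // j Hj.
  by rewrite coef_add1 ifN ?He //; lia.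
Qed.

(* The map a |-> omega^n * (1 + a); wmul 1 enumerates the limit ordinals
   and wmul n enumerates the positions of the points of the n-th derived
   set. *)
Definition wmul (n : nat) (a : ordw) : ordw := omul (opow n) (oadd (onat 1) a).

Definition wmulC (n : nat) (s : cnf) : cnf :=
  cmul (mkc (rcons (nseq n 0) 1)) (cadd (mkc [:: 1]) s).

Lemma wmul_fin n s : wmul n (OFin s) = OFin (wmulC n s).
Proof. by []. Qed.

Lemma wmul_top n : wmul n OTop = OTop.
Proof. by rewrite /wmul /omul /opow /= strip_pow; case: n. Qed.

Lemma coef_wmulC n s i : coef (wmulC n s) i =
  if i < n then 0 else if (i == n) && is_nat s then (coef s 0).+1 else coef s (i - n).
Proof.
rewrite /wmulC coef_mul_pow coef_1add.
case: (ltngtP i n) => H //; last by subst; rewrite subnn.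
by rewrite ifN //; lia.
Qed.

Lemma wmulC1_not_nat s : is_nat (wmulC 1 s) = false.
Proof.
apply/negP => /is_natP H; case Hs: (is_nat s).
- by have := H 0; rewrite coef_wmulC /= Hs.
- move/negP: Hs; apply; apply/is_natP => j.
  by have := H j.+1; rewrite coef_wmulC /= subn1.
Qed.

Lemma wmul_wmul1 n a : 1 <= n -> wmul n (wmul 1 a) = wmul n.+1 a.
Proof.
move=> Hn; case: a => [s|]; last by rewrite !wmul_top.
rewrite !wmul_fin; congr OFin; apply: coef_ext => i.
rewrite !coef_wmulC wmulC1_not_nat andbF.
case: (ltngtP i n) => H.
- by rewrite ifT //; lia.
- have -> : (i - n < 1) = false by lia.
  have -> : (i < n.+1) = false by lia.
  have -> : (i - n == 1) = (i == n.+1) by lia.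
  by have -> : i - n - 1 = i - n.+1 by lia.
- by subst; rewrite subnn /= (ltnSn n).
Qed.

Lemma wmul1_limit a : is_limit (wmul 1 a).
Proof.
case: a => [s|]; last by rewrite wmul_top; exact: is_limit_top.
rewrite wmul_fin; apply/is_limit_fin; split; last by rewrite coef_wmulC.
apply: NNPP => Hnz; move: (wmulC1_not_nat s) => /negP; apply; apply/is_natP => j.
by apply: NNPP => H; apply: Hnz; exists j.+1.
Qed.

Lemma limit_wmul1 b : is_limit b -> exists a, wmul 1 a = b.
Proof.
case: b => [t|]; last by exists OTop; rewrite wmul_top.
move/is_limit_fin => [Hnz H0].
pose u := mkc (behead (cval t)).
have Hu j : coef u j = coef t j.+1 by rewrite /u coef_mkc nth_behead.
case Hsm: (is_nat u).
- have Ht1 : coef t 1 <> 0.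
    move=> E; case: Hnz => [[|[|j]] Hj]; [exact: Hj H0|exact: Hj E|].
    by apply: Hj; rewrite -Hu; move/is_natP: Hsm => ->.
  have Hs1 : is_nat (mkc [:: (coef t 1).-1]) by apply/is_natP => j; rewrite coef_mkc; case: j.
  exists (OFin (mkc [:: (coef t 1).-1])); rewrite wmul_fin; congr OFin.
  apply: coef_ext => -[|[|j]]; rewrite coef_wmulC //.
  + by rewrite /= Hs1 coef_mkc /=; lia.
  + by rewrite /= coef_mkc subn1 /= nth_nil -Hu; move/is_natP: Hsm => ->.
- exists (OFin u); rewrite wmul_fin; congr OFin.
  by apply: coef_ext => -[|j]; rewrite coef_wmulC Hsm //= andbF subn1 /= Hu.
Qed.

Lemma wmul1_mono a b : ordlt a b -> ordlt (wmul 1 a) (wmul 1 b).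
Proof.
case: a => [s|] //; case: b => [t|]; last by rewrite wmul_top wmul_fin.
move/ordltE => [i [Hi He]]; rewrite !wmul_fin; apply/ordltE.
exists i.+1; rewrite !coef_wmulC /= !subn1 /=; split.
- case: i Hi He => [|i] Hi He //=.
  by rewrite (@is_nat_tail s t) => [|j]; [case: (is_nat t) | exact: He].
- move=> [|j] // Hj; rewrite !coef_wmulC /= !subn1 /=.
  have -> : (j.+1 == 1) = false by lia.
  exact: He.
Qed.

(* The a-th non-limit ordinal (a < omega^omega): a itself below omega,
   a + 1 from omega on.  It is the position in K of the a-th point of
   K \ K'. *)
Definition isol (a : ordw) : ordw := if ordlt a omega then a else oadd a (onat 1).

Lemma lt_omega s : ordlt (OFin s) omega = is_nat s.
Proof.
have Hw i : coef (mkc (rcons (nseq 1 0) 1)) i = nth 0 [:: 0; 1] i by rewrite coef_mkc.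
apply/idP/idP.
- move/ordltE => [i [Hi He]]; apply/is_natP => j.
  case: i Hi He => [|[|i]] Hi He; rewrite Hw in Hi => //.
  + case: j => [|j]; first by move: Hi => /=; lia.
    by rewrite He // Hw; case: j.
  + by move: Hi; rewrite /= nth_nil.
- move/is_natP => H; apply/ordltE; exists 1; rewrite Hw H; split => //.
  by move=> [|[|j]] // _; rewrite Hw H /=; case: j.
Qed.

Lemma isol_fin s : isol (OFin s) = if is_nat s then OFin s else OFin (csucc s).
Proof. by rewrite /isol lt_omega. Qed.

Lemma isol_not_limit a : ordlt a OTop -> ~ is_limit (isol a).
Proof.
case: a => [s|] // _; rewrite isol_fin; case Hs: (is_nat s) => /is_limit_fin [[i Hi] H0].
- by case: i Hi => [|i] Hi //; move/is_natP: Hs Hi => ->.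
- by move: H0; rewrite /csucc coef_add1.
Qed.

Lemma not_limit_isol b : ~ is_limit b -> exists a, ordlt a OTop /\ isol a = b.
Proof.
case: b => [t|]; last by move=> H; case: (H is_limit_top).
move=> HL; case Ht: (is_nat t); first by exists (OFin t); rewrite isol_fin Ht.
have Hnz : exists i, coef t i <> 0.
  apply: NNPP => Hn; move/negP: Ht; apply; apply/is_natP => j.
  by apply: NNPP => Hj; apply: Hn; exists j.+1.
have H0 : coef t 0 <> 0 by move=> H0; apply: HL; apply/is_limit_fin.
exists (OFin (cpred t)); split => //; rewrite isol_fin.
have -> : is_nat (cpred t) = false.
  by rewrite -Ht; apply: is_nat_tail => j; rewrite coef_cpred.
by rewrite cpredK.
Qed.

Lemma isol_mono a b :
  ordlt a OTop -> ordlt b OTop -> ordlt a b -> ordlt (isol a) (isol b).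
Proof.
case: a => [s|] // _; case: b => [t|] // _ Hst; have /ordltE [i [Hi He]] := Hst.
have Hi0 : is_nat s != is_nat t -> i != 0.
  move=> Hne; apply/eqP => E; subst i; move/negP: Hne; apply.
  by apply/eqP; apply: is_nat_tail => j; apply: He.
rewrite !isol_fin; case Hs: (is_nat s); case Ht: (is_nat t) => //.
- apply/ordltE; exists i; rewrite /csucc coef_add1.
  have := Hi0; rewrite Hs Ht => /(_ isT) /negbTE ->.
  by split => // j Hj; rewrite coef_add1 ifF ?He //; lia.
- have := Hi0; rewrite Hs Ht => /(_ isT); clear Hi0.
  by case: i Hi He => [|i] Hi He // _; move/is_natP: Ht Hi => ->.
- apply/ordltE; exists i; rewrite /csucc !coef_add1; split.
  + by case: eqP => [E|_] //; subst i.
  + move=> j Hj; rewrite !coef_add1.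
    have -> : (j == 0) = false by lia.
    exact: He.
Qed.

Lemma wmul_isol u a : ordlt a OTop -> wmul u (isol a) = omul (opow u) (oadd a (onat 1)).
Proof.
case: a => [s|] // _; rewrite isol_fin.
have -> : omul (opow u) (oadd (OFin s) (onat 1)) =
          OFin (cmul (mkc (rcons (nseq u 0) 1)) (csucc s)) by [].
case Hs: (is_nat s); rewrite wmul_fin; congr OFin; apply: coef_ext => i;
  rewrite coef_wmulC coef_mul_pow ?is_nat_csucc Hs ?andbF ?andbT //.
case: (ltngtP i u) => H //; last by subst; rewrite subnn /csucc coef_add1.
by rewrite /csucc coef_add1 ifF //; lia.
Qed.

Section RealSets.
Local Open Scope R_scope.

Definition closed_set (L : R -> Prop) : Prop :=
  forall z, (forall eps, 0 < eps -> exists y, L y /\ Rabs (y - z) < eps) -> L z.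

Lemma compact_closed_set K : compact K -> closed_set K.
Proof.
move=> /compact_P2 HK z Hz; apply: NNPP => Hnz.
have [del Hdel] := HK z Hnz.
have [y [Ky Hy]] := Hz del (cond_pos del).
exact: Hdel y Hy Ky.
Qed.

Lemma derived_closed L : closed_set (derived L).
Proof.
move=> z Hz eps Heps.
have [y [Dy Hy]] := Hz (eps / 2) ltac:(lra).
case: (Req_dec y z) => [Eyz | Nyz].
- subst y; have [w [Lw [Hw1 Hw2]]] := Dy (eps / 2) ltac:(lra).
  by exists w; split => //; split => //; lra.
- have Hd : 0 < Rmin (eps / 2) (Rabs (y - z)).
    by apply: Rmin_pos; [lra | apply: Rabs_pos_lt; lra].
  have [w [Lw [Hw1 Hw2]]] := Dy _ Hd.
  have := Rmin_l (eps / 2) (Rabs (y - z)); have := Rmin_r (eps / 2) (Rabs (y - z)).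
  move=> H1 H2; exists w; split => //; split.
  + by move=> Ewz; subst w; rewrite Rabs_minus_sym in Hw2; lra.
  + by split_Rabs; lra.
Qed.

Lemma derived_sub L x : closed_set L -> derived L x -> L x.
Proof.
move=> HL Hx; apply: HL => eps Heps.
by have [y [Ly [_ Hy]]] := Hx eps Heps; exists y.
Qed.

Definition strict_total : Prop :=
  [/\ forall a, ~ ordlt a a,
      forall a b c, ordlt a b -> ordlt b c -> ordlt a c &
      forall a b, a = b \/ ordlt a b \/ ordlt b a].

(* It is transferred from the order of the reals by any enumeration of a
   set of order type omega^omega + 1. *)
Lemma enum_strict_total L g : rev_iso L (fun _ => True) g -> strict_total.
Proof.
move=> [_ [Hs Ho]]; split.
- by move=> a Ha; have [x [Lx Ex]] := Hs a I; subst a; move/(Ho x x Lx Lx): Ha; lra.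
- move=> a b c Hab Hbc.
  have [xa [La Ea]] := Hs a I; have [xb [Lb Eb]] := Hs b I; have [xc [Lc Ec]] := Hs c I.
  subst a b c; move/(Ho _ _ La Lb): Hab; move/(Ho _ _ Lb Lc): Hbc => Hbc Hab.
  by apply/(Ho _ _ La Lc); lra.
- move=> a b; have [xa [La <-]] := Hs a I; have [xb [Lb <-]] := Hs b I.
  case: (Rtotal_order xa xb) => [H | [-> | H]]; first by right; right; apply/(Ho _ _ Lb La).
  + by left.
  + by right; left; apply/(Ho _ _ La Lb).
Qed.

Lemma kpos_enum L P g x : rev_iso L P g -> L x -> (forall b, ordlt b (g x) -> P b) ->
  kpos L (g x) x.
Proof.
move=> [H1 [H2 H3]] Lx HP; split => //; exists g; split; [|split].
- by move=> y [Ly Hy]; apply/(H3 y x Ly Lx).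
- move=> b Hb; have [y [Ly Ey]] := H2 b (HP b Hb); exists y; split => //; split => //.
  by apply/(H3 y x Ly Lx); rewrite Ey.
- by move=> y z [Ly _] [Lz _]; exact: H3.
Qed.

Lemma enum_transport L g (M : R -> Prop) (P : ordw -> Prop) (phi : ordw -> ordw) :
  strict_total -> rev_iso L (fun _ => True) g ->
  (forall x, M x <-> L x /\ exists a, P a /\ phi a = g x) ->
  (forall a b, P a -> P b -> ordlt a b -> ordlt (phi a) (phi b)) ->
  exists h, rev_iso M P h /\ (forall x, M x -> g x = phi (h x)).
Proof.
move=> [Hirr Htr Htot] [_ [Hs Ho]] HM Hmono.
pose h x := epsilon (inhabits OTop) (fun a => P a /\ phi a = g x).
have Hh x : M x -> P (h x) /\ phi (h x) = g x.
  by move/HM => [_ Hx]; exact: (epsilon_spec (inhabits OTop) _ Hx).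
have Hrefl a b : P a -> P b -> ordlt (phi a) (phi b) -> ordlt a b.
  move=> Pa Pb H; case: (Htot a b) => [E | [// | E]]; first by subst; case: (Hirr _ H).
  by case: (Hirr (phi a)); exact: Htr _ _ _ H (Hmono _ _ Pb Pa E).
exists h; split; [split; [|split] | by move=> x /Hh []].
- by move=> x /Hh [].
- move=> b Pb; have [x [Lx Ex]] := Hs (phi b) I.
  have Mx : M x by apply/HM; split => //; exists b.
  exists x; split => //; have [P1 P2] := Hh x Mx.
  case: (Htot (h x) b) => [// | [E | E]].
  + by case: (Hirr (phi b)); rewrite -{1}Ex -P2; exact: Hmono.
  + by case: (Hirr (phi b)); rewrite -{2}Ex -P2; exact: Hmono.
- move=> x y Mx My; have [Px Ex] := Hh x Mx; have [Py Ey] := Hh y My.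
  have [Lx _] := HM x; have [Ly _] := HM y.
  rewrite (Ho x y (Lx Mx).1 (Ly My).1) -Ex -Ey.
  by split; [exact: Hrefl | exact: Hmono].
Qed.

Section ClosedEnumeration.
Variables (L : R -> Prop) (g : R -> ordw).
Hypothesis closedL : closed_set L.
Hypothesis enumL : rev_iso L (fun _ => True) g.

(* Below each point x of L there is an interval free of points of L: its
   lower end is the point at the next position. *)
Lemma gap_below x : L x -> exists x', x' < x /\ forall y, L y -> y < x -> y <= x'.
Proof.
have [_ [Hs Ho]] := enumL; move=> Lx; case Egx: (g x) => [s|].
- have [x' [Lx' Ex']] := Hs (OFin (csucc s)) I.
  have Hx' : x' < x by apply/(Ho _ _ Lx Lx'); rewrite Egx Ex'; exact: csucc_lt.
  exists x'; split => // y Ly Hyx; apply: Rnot_lt_le => Hxy.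
  have A1 := proj1 (Ho _ _ Lx Ly) Hyx; have A2 := proj1 (Ho _ _ Ly Lx') Hxy.
  by rewrite Egx in A1; rewrite Ex' in A2; exact: csucc_gap A1 A2.
- exists (x - 1); split; first lra.
  by move=> y Ly /(Ho _ _ Lx Ly); rewrite Egx.
Qed.

Lemma derived_above x : derived L x ->
  forall eps, 0 < eps -> exists y, L y /\ x < y /\ y < x + eps.
Proof.
move=> Hx eps Heps; have [x' [Hx' Hgap]] := gap_below (derived_sub closedL Hx).
have Hd : 0 < Rmin eps (x - x') by apply: Rmin_pos; lra.
have := Rmin_l eps (x - x'); have := Rmin_r eps (x - x') => H1 H2.
have [y [Ly [Hyx Hy]]] := Hx _ Hd; exists y; split => //.
case: (Rtotal_order y x) => [Hlt | [// | Hgt]].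
- by have := Hgap y Ly Hlt; split_Rabs; lra.
- by split => //; split_Rabs; lra.
Qed.

Lemma inf_above x : (exists z, L z /\ x < z) -> exists m, [/\ L m, x <= m,
  forall y, L y -> x < y -> m <= y &
  forall eps, 0 < eps -> exists y, L y /\ x < y /\ y < m + eps].
Proof.
move=> [z [Lz Hxz]].
pose E v := L (- v) /\ x < - v.
have Hb : bound E by exists (- x) => v [_ Hv]; lra.
have Hne : exists v, E v by exists (- z); rewrite /E Ropp_involutive.
have [l [Hub Hlub]] := completeness E Hb Hne.
have Hlow y : L y -> x < y -> - l <= y.
  move=> Ly Hy; suff : - y <= l by lra.
  by apply: Hub; rewrite /E Ropp_involutive.
have Happ eps : 0 < eps -> exists y, L y /\ x < y /\ y < - l + eps.
  move=> Heps; apply: NNPP => Hn; suff : l <= l - eps by lra.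
  apply: Hlub => v [Lv Hv]; apply: Rnot_lt_le => Hlt.
  by apply: Hn; exists (- v); split => //; split => //; lra.
exists (- l); split => //.
- apply: closedL => eps Heps; have [y [Ly [Hy1 Hy2]]] := Happ eps Heps.
  by exists y; split => //; have := Hlow y Ly Hy1; split_Rabs; lra.
- suff : l <= - x by lra.
  by apply: Hlub => v [_ Hv]; lra.
Qed.

Lemma derived_iff_limit x : derived L x <-> L x /\ is_limit (g x).
Proof.
have [_ [Hs Ho]] := enumL; split.
- move=> Hx; have Lx := derived_sub closedL Hx; split => //; split.
  + have [y [Ly [Hy _]]] := derived_above Hx Rlt_0_1.
    by exists (g y); apply/(Ho _ _ Ly Lx).
  + move=> c Hcx; have [z [Lz Ez]] := Hs c I; subst c.
    have Hxz : x < z by apply/(Ho _ _ Lz Lx).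
    have [y [Ly [Hy1 Hy2]]] := derived_above Hx (eps := z - x) ltac:(lra).
    by exists (g y); split; [apply/(Ho _ _ Lz Ly); lra | apply/(Ho _ _ Ly Lx)].
- move=> [Lx [[c Hcx] HL]]; have [z [Lz Ez]] := Hs c I; subst c.
  have Hxz : x < z by apply/(Ho _ _ Lz Lx).
  have [m [Lm Hxm Hlow Happ]] := inf_above (ex_intro _ z (conj Lz Hxz)).
  have Emx : m = x.
    case: (Rle_lt_or_eq_dec _ _ Hxm) => [Hlt | //]; exfalso.
    have [d [Hd1 Hd2]] := HL _ (proj1 (Ho _ _ Lm Lx) Hlt).
    have [w [Lw Ew]] := Hs d I; subst d.
    have := Hlow w Lw (proj2 (Ho _ _ Lw Lx) Hd2).
    by have := proj2 (Ho _ _ Lm Lw) Hd1; lra.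
  move=> eps Heps; have [y [Ly [Hy1 Hy2]]] := Happ eps Heps.
  by exists y; split => //; split; [lra | split_Rabs; lra].
Qed.

Lemma derived_enum : exists h, rev_iso (derived L) (fun _ => True) h /\
  forall x, derived L x -> g x = wmul 1 (h x).
Proof.
apply: (enum_transport (enum_strict_total enumL) enumL) => [x | a b _ _].
- rewrite derived_iff_limit; split => [[Lx /limit_wmul1 [a Ea]] | [Lx [a [_ <-]]]].
  + by split => //; exists a.
  + by split => //; exact: wmul1_limit.
- exact: wmul1_mono.
Qed.

Lemma isolated_enum : exists h,
  rev_iso (fun x => L x /\ ~ derived L x) (fun a => ordlt a OTop) h /\
  forall x, L x /\ ~ derived L x -> g x = isol (h x).
Proof.
apply: (enum_transport (enum_strict_total enumL) enumL) => [x | a b Ha Hb].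
- rewrite derived_iff_limit; split => [[Lx HL] | [Lx [a [Ha Ea]]]].
  + by split => //; apply: not_limit_isol => H; apply: HL.
  + by split => // -[_]; rewrite -Ea; exact: isol_not_limit.
- exact: isol_mono.
Qed.

End ClosedEnumeration.

Lemma deriv_n_enum L g : closed_set L -> rev_iso L (fun _ => True) g -> forall n,
  exists h, [/\ rev_iso (deriv_n n.+1 L) (fun _ => True) h, closed_set (deriv_n n.+1 L) &
    forall x, deriv_n n.+1 L x -> L x /\ g x = wmul n.+1 (h x)].
Proof.
move=> HL Hg; elim=> [|n [h [Hh Hcl Hpos]]].
- have [h [Hh Hpos]] := derived_enum HL Hg.
  exists h; split => // [|x Hx]; first exact: derived_closed.
  by split; [exact: derived_sub Hx | exact: Hpos].
- have [h' [Hh' Hpos']] := derived_enum Hcl Hh.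
  exists h'; split => // [|x Hx]; first exact: derived_closed.
  have [Lx ->] := Hpos x (derived_sub Hcl Hx).
  by rewrite (Hpos' x Hx) wmul_wmul1.
Qed.

End RealSets.

Theorem mainTheorem3 (K : R -> Prop) (rho : R) (mu : nat) :
  self_similar K rho mu ->
  (forall (n : nat) (a : ordw), (1 <= n)%N ->
     exists x, kpos (deriv_n n K) a x /\
               kpos K (omul (opow n) (oadd (onat 1) a)) x) /\
  (forall a : ordw, ordlt a OTop ->
     exists x, kpos (Tset K 0) a x /\
               kpos K (if ordlt a omega then a else oadd a (onat 1)) x) /\
  (forall (u : nat) (a : ordw), (1 <= u)%N -> ordlt a OTop ->
     exists x, kpos (Tset K u) a x /\
               kpos K (omul (opow u) (oadd a (onat 1))) x).
Proof.
move=> [_ [/compact_closed_set HK [_ [_ [f Hf]]]]].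
have lt_top b c : ordlt b c -> ordlt b OTop by case: b.
split; [|split].
- case=> // n a _; have [g [Hg _ Hpos]] := deriv_n_enum HK Hf n.
  have [x [Dx <-]] := Hg.2.1 a I; have [Kx Efx] := Hpos x Dx.
  exists x; split; first exact: kpos_enum Hg Dx _.
  by rewrite -[omul _ _]/(wmul n.+1 (g x)) -Efx; exact: kpos_enum Hf Kx _.
- move=> a Ha; have [h [Hh Hpos]] := isolated_enum HK Hf.
  have [x [Tx <-]] := Hh.2.1 a Ha.
  exists x; split; first exact: kpos_enum Hh Tx (fun b => lt_top b _).
  by rewrite -[if _ then _ else _]/(isol (h x)) -Hpos //; exact: kpos_enum Hf Tx.1 _.
- case=> // u a _ Ha; have [g [Hg Hcl Hpos]] := deriv_n_enum HK Hf u.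
  have [h [Hh Hpos']] := isolated_enum Hcl Hg.
  have [x [Tx Ex]] := Hh.2.1 a Ha; subst a; have [Kx Efx] := Hpos x Tx.1.
  exists x; split; first exact: kpos_enum Hh Tx (fun b => lt_top b _).
  by rewrite -wmul_isol // -(Hpos' x Tx) -Efx; exact: kpos_enum Hf Kx _.
Qed.
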